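(* In the setting of the context, let $\mathbf{X}\in\{0,1\}^E$ be the indicator vector of the edges matched by MMP-ALG. Then, in the limit $T\to\infty$ with $|U|=o(\sqrt{T})$, $\mathbb{E}[f(\mathbf{X})]\ge (1-1/e)F(\mathbf{x}^* )$.
   Context: Bipartite graph $G=(U,V,E)$; online rounds $t=1,\dots,T$, in each of which independently at most one $v\in V$ arrives, $v$ with probability $p_v$, $\sum_v p_v\le 1$, $r_v=Tp_v\in[0,1]$. Each $u\in U$ can be matched at most once. $f:2^E\to\mathbb{R}_{\ge0}$ is non-negative monotone submodular (identified with a function on $\{0,1\}^E$ via indicator vectors), and $F$ is its multilinear extension $F(\mathbf{x})=\sum_{S\subseteq E}\prod_{e\in S}x_e\prod_{e\notin S}(1-x_e) f(S)$. $E(w)$ denotes the set of edges incident to $w$. $\mathbf{x}^*\in[0,1]^E$ satisfies $\sum_{e\in E(v)}x^*_e\le r_v$ for all $v\in V$ and $\sum_{e\in E(u)}x^*_e\le1$ for all $u\in U$. MMP-ALG: when $v$ arrives, sample at most one edge $e\in E(v)$, each $e$ with probability $x^*_e/r_v$; if $e=(u,v)$ is sampled and $u$ is still unmatched, match $e$, otherwise skip. *)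

From HB Require Import structures.
From mathcomp Require Import all_boot all_order all_algebra.
From mathcomp Require Import reals sequences exp.
Set Implicit Arguments. Unset Strict Implicit. Unset Printing Implicit Defensive.
Import Order.TTheory GRing.Theory Num.Theory.
Local Open Scope ring_scope.

Section MMP.
Variables (R : realType) (U V Ed : finType) (eu : Ed -> U) (ev : Ed -> V).

Definition set_nonneg (f : {set Ed} -> R) := forall S, 0 <= f S.
Definition set_monotone (f : {set Ed} -> R) :=
  forall A B : {set Ed}, A \subset B -> f A <= f B.
Definition set_submodular (f : {set Ed} -> R) :=
  forall A B : {set Ed}, f (A :|: B) + f (A :&: B) <= f A + f B.

Definition multilinear_ext (f : {set Ed} -> R) (x : Ed -> R) : R :=
  \sum_(S : {set Ed})
     ((\prod_(e in S) x e) * (\prod_(e in ~: S) (1 - x e)) * f S).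

Definition rate (T : nat) (p : V -> R) (v : V) : R := T%:R * p v.

(* outcome of one round: None = no arrival; Some (v, None) = v arrives and no
   edge is sampled; Some (v, Some e) = v arrives and edge e is sampled *)
Definition outcome := option (V * option Ed).

Definition round_prob (T : nat) (p : V -> R) (x : Ed -> R) (o : outcome) : R :=
  match o with
  | None => 1 - \sum_(v : V) p v
  | Some (v, None) =>
      p v * (1 - \sum_(e : Ed | ev e == v) x e / rate T p v)
  | Some (v, Some e) =>
      if ev e == v then p v * (x e / rate T p v) else 0
  end.

Definition alg_step (M : {set Ed}) (o : outcome) : {set Ed} :=
  match o with
  | Some (v, Some e) =>
      if (ev e == v) && ~~ [exists e' in M, eu e' == eu e] then e |: M else M
  | _ => M
  end.

(* the set of matched edges (support of the indicator vector X) *)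
Definition alg_run (T : nat) (w : {ffun 'I_T -> outcome}) : {set Ed} :=
  foldl alg_step set0 [seq w t | t <- enum 'I_T].

Definition alg_expectation (T : nat) (p : V -> R) (x : Ed -> R)
    (f : {set Ed} -> R) : R :=
  \sum_(w : {ffun 'I_T -> outcome})
     (\prod_(t < T) round_prob T p x (w t)) * f (alg_run w).

End MMP.

From HB Require Import structures.
From mathcomp Require Import all_boot all_order all_algebra.
From mathcomp Require Import reals sequences exp.
From mathcomp Require Import ring lra.
Import Order.TTheory GRing.Theory Num.Theory.
Local Open Scope ring_scope.
Set Implicit Arguments. Unset Strict Implicit. Unset Printing Implicit Defensive.

(** In every round each edge e is sampled with probability x_e / T, whatever the
   arrival distribution.  Let the potential Phi(M) of a set M of matched edges be
   E f(M ∪ R_M), where R_M keeps each edge whose U-endpoint is unmatched in M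
   independently with probability x_e; then Phi(∅) = F(x).  By submodularity one
   round increases f in expectation by at least (Phi(M) - f(M)) / T, and it does not
   decrease Phi in expectation: matching u only discards from R_M the edges at u,
   whose x-weights sum to at most 1.  Hence after k rounds
   E f ≥ (1 - (1 - 1/T)^k) Phi(∅), and (1 - 1/T)^T ≤ 1/e, so the bound holds for
   every T ≥ 1, without passing to the limit. *)

Section IndependentRounding.
Variables (R : realType) (Ed : finType) (x : Ed -> R).

Definition indep_wt (S : {set Ed}) : R :=
  \prod_(e in S) x e * \prod_(e in ~: S) (1 - x e).

Definition indep_mean (g : {set Ed} -> R) : R := \sum_(S : {set Ed}) indep_wt S * g S.

Lemma multilinear_extE f : multilinear_ext f x = indep_mean f.
Proof. by []. Qed.

Lemma indep_wtE S : indep_wt S = \prod_e (if e \in S then x e else 1 - x e).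
Proof.
rewrite (bigID (mem S)) /=; congr (_ * _); first by apply: eq_bigr => e ->.
by apply: eq_big => e; rewrite ?in_setC // => /negbTE ->.
Qed.

Lemma sum_indep_wt : \sum_(S : {set Ed}) indep_wt S = 1.
Proof.
under eq_bigr do rewrite indep_wtE.
rewrite (reindex (fun b : {ffun Ed -> bool} => [set e | b e])) /=; last first.
  exists (fun S : {set Ed} => [ffun e => e \in S]) => [b _|S _].
    by apply/ffunP => e; rewrite ffunE inE.
  by apply/setP => e; rewrite inE ffunE.
under eq_bigr do under eq_bigr do rewrite inE.
rewrite -(bigA_distr_bigA (fun e (b : bool) => if b then x e else 1 - x e)) /=.
by apply: big1 => e _; rewrite big_bool /= subrKC.
Qed.

Lemma indep_wt_setD1 (S : {set Ed}) e :
  e \in S -> x e * indep_wt (S :\ e) = (1 - x e) * indep_wt S.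
Proof.
move=> eS; rewrite !indep_wtE (bigD1 e) // [in RHS](bigD1 e) //= setD11 eS.
under eq_bigr => i /negbTE ie do rewrite in_setD1 ie.
by rewrite mulrCA.
Qed.

Lemma eq_indep_mean g1 g2 : g1 =1 g2 -> indep_mean g1 = indep_mean g2.
Proof. by move=> eq_g; apply: eq_bigr => S _; rewrite eq_g. Qed.

Lemma indep_mean_cst c : indep_mean (fun _ => c) = c.
Proof. by rewrite /indep_mean -mulr_suml sum_indep_wt mul1r. Qed.

Lemma indep_meanD g1 g2 :
  indep_mean (fun S => g1 S + g2 S) = indep_mean g1 + indep_mean g2.
Proof. by rewrite /indep_mean -big_split; apply: eq_bigr => S _; rewrite mulrDr. Qed.

Lemma indep_meanB g1 g2 :
  indep_mean (fun S => g1 S - g2 S) = indep_mean g1 - indep_mean g2.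
Proof. by rewrite /indep_mean -sumrB; apply: eq_bigr => S _; rewrite mulrBr. Qed.

Lemma indep_mean_sum (I : finType) (P : pred I) (G : I -> {set Ed} -> R) :
  indep_mean (fun S => \sum_(i | P i) G i S) = \sum_(i | P i) indep_mean (G i).
Proof.
by rewrite /indep_mean; under eq_bigr do rewrite mulr_sumr; rewrite exchange_big.
Qed.

Lemma indep_mean_mem e g :
  indep_mean (fun S => (e \in S)%:R * g S) = x e * indep_mean (fun S => g (e |: S)).
Proof.
pose tau (S : {set Ed}) := if e \in S then S :\ e else e |: S.
have tauK : involutive tau.
  move=> S; rewrite /tau; case: (boolP (e \in S)) => eS.
    by rewrite setD11 setD1K.
  by rewrite setU11 setU1K.
rewrite /indep_mean (bigID (fun S : {set Ed} => e \in S)).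
rewrite [in RHS](bigID (fun S : {set Ed} => e \in S)) /=.
rewrite [X in _ + X]big1 ?addr0 => [|S /negbTE ->]; last by rewrite mul0r mulr0.
rewrite [X in _ * (_ + X)](reindex_inj (inv_inj tauK)) /=.
rewrite [X in _ * (_ + X)](eq_big (fun S : {set Ed} => e \in S)
  (fun S => indep_wt (S :\ e) * g S)); last first.
- move=> S; rewrite /tau; case: ifP => eS; last by rewrite setU11.
  by rewrite setD1K.
- by move=> S; rewrite /tau; case: ifP => eS; rewrite ?setD11 ?setU11 ?eS.
rewrite -big_split mulr_sumr; apply: eq_bigr => S eS /=.
rewrite eS mul1r (setUidPr _) ?sub1set // mulrDr [x e * (indep_wt (S :\ e) * _)]mulrA.
by rewrite indep_wt_setD1 //; ring.
Qed.

Hypothesis x01 : forall e, 0 <= x e <= 1.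

Lemma indep_wt_ge0 S : 0 <= indep_wt S.
Proof.
rewrite indep_wtE; apply: prodr_ge0 => e _; have /andP[x_ge0 x_le1] := x01 e.
by case: ifP; rewrite ?subr_ge0.
Qed.

Lemma ler_indep_mean g1 g2 : (forall S, g1 S <= g2 S) -> indep_mean g1 <= indep_mean g2.
Proof. by move=> le_g; apply: ler_sum => S _; rewrite ler_wpM2l ?indep_wt_ge0. Qed.

Lemma multilinear_ext_ge0 f : set_nonneg f -> 0 <= multilinear_ext f x.
Proof.
by move=> f_ge0; rewrite multilinear_extE -(indep_mean_cst 0); apply: ler_indep_mean.
Qed.

End IndependentRounding.

Lemma sum_filter_set (R : pzSemiRingType) (Ed : finType) (S : {set Ed}) (Q : pred Ed)
    (h : Ed -> R) :
  \sum_(e in [set e in S | Q e]) h e = \sum_(e | Q e) (e \in S)%:R * h e.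
Proof.
rewrite big_mkcond [RHS]big_mkcond; apply: eq_bigr => e _; rewrite inE.
by case: (e \in S); case: (Q e); rewrite ?mul1r ?mul0r.
Qed.

Lemma submodular_setU_le (R : realType) (Ed : finType) (f : {set Ed} -> R) :
  set_submodular f ->
  forall X A, f (X :|: A) <= f X + \sum_(e in A) (f (e |: X) - f X).
Proof.
move=> fsub X A; move: {2}#|A| (erefl #|A|) => n; elim: n A => [|n IHn] A cardA.
  by rewrite (cards0_eq cardA) setU0 big_set0 addr0.
have [e eA] : exists e, e \in A by apply/card_gt0P; rewrite cardA.
rewrite (big_setD1 e eA) /=.
have cardAe : #|A :\ e| = n by move: cardA; rewrite (cardsD1 e) eA => -[].
have := IHn _ cardAe.
have := fsub (X :|: A :\ e) (e |: X).
have -> : (X :|: A :\ e) :|: (e |: X) = X :|: A.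
  apply/setP => y; rewrite !inE; case: (eqVneq y e) => [->|_] /=.
    by rewrite eA !orbT.
  by case: (y \in X); case: (y \in A).
have -> : (X :|: A :\ e) :&: (e |: X) = X.
  apply/setP => y; rewrite !inE; case: (eqVneq y e) => [->|_] /=.
    by case: (e \in X).
  by case: (y \in X); case: (y \in A).
lra.
Qed.

Lemma indep_mean_submod_le (R : realType) (Ed : finType) (x : Ed -> R)
    (f : {set Ed} -> R) (B : {set Ed} -> {set Ed}) (D : pred Ed) :
  (forall e, 0 <= x e <= 1) -> set_submodular f ->
  (forall e S, D e -> B (e |: S) = B S) ->
  indep_mean x (fun S => f (B S :|: [set e in S | D e])) <=
  indep_mean x (fun S => f (B S)) +
  \sum_(e | D e)
     x e * (indep_mean x (fun S => f (e |: B S)) - indep_mean x (fun S => f (B S))).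
Proof.
move=> x01 f_submod B_D.
apply: le_trans (ler_indep_mean x01 (g2 := fun S => f (B S) +
  \sum_(e | D e) (e \in S)%:R * (f (e |: B S) - f (B S))) _) _.
  by move=> S; rewrite -sum_filter_set submodular_setU_le.
rewrite indep_meanD indep_mean_sum lerD2l; apply: ler_sum => e De.
rewrite indep_mean_mem -indep_meanB.
by under eq_indep_mean => S do rewrite B_D //.
Qed.

Lemma pow_1Binvn_le_expRN1 (R : realType) n :
  (0 < n)%N -> (1 - n%:R^-1) ^+ n <= expR (-1) :> R.
Proof.
move=> n_gt0; have n_neq0 : n%:R != 0 :> R by rewrite pnatr_eq0 -lt0n.
apply: (@le_trans _ _ (expR (- n%:R^-1) ^+ n)).
  apply: lerXn2r; rewrite ?nnegrE ?expR_ge0 ?expR_ge1Dx //.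
  by rewrite subr_ge0 invf_le1 ?ltr0n ?ler1n.
by rewrite -expRM_natl mulrN divff.
Qed.

Lemma sum_outcome (M : nmodType) (V Ed : finType) (F : outcome V Ed -> M) :
  \sum_o F o =
  F None + \sum_v (F (Some (v, None)) + \sum_e F (Some (v, Some e))).
Proof.
have sum_option (X : finType) (G : option X -> M) :
    \sum_o G o = G None + \sum_t G (Some t).
  rewrite (bigD1 None) //=; congr (_ + _).
  rewrite (reindex_omap Some id) /=; last by case=> // t _.
  by apply: eq_bigl => t; rewrite eqxx.
rewrite sum_option; congr (_ + _).
transitivity (\sum_v \sum_oe F (Some (v, oe))).
  by rewrite pair_big; apply: eq_bigr => -[].
by apply: eq_bigr => v _; rewrite sum_option.
Qed.

Lemma sum_ffun_ordS (M : nmodType) (O : finType) k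
    (F : O -> {ffun 'I_k -> O} -> M) :
  \sum_(w : {ffun 'I_k.+1 -> O}) F (w ord0) [ffun j => w (lift ord0 j)] =
  \sum_o \sum_(w : {ffun 'I_k -> O}) F o w.
Proof.
pose cons_ffun (q : O * {ffun 'I_k -> O}) : {ffun 'I_k.+1 -> O} :=
  [ffun i => if unlift ord0 i is Some j then q.2 j else q.1].
rewrite pair_bigA (reindex cons_ffun) /=; last first.
  exists (fun w : {ffun 'I_k.+1 -> O} => (w ord0, [ffun j => w (lift ord0 j)])).
    move=> [o w] _; rewrite /cons_ffun /= ffunE unlift_none; congr (_, _).
    by apply/ffunP => j; rewrite !ffunE liftK.
  move=> w _; apply/ffunP => i; rewrite !ffunE.
  by case: (unliftP ord0 i) => [j ->|->]; rewrite ?ffunE.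
apply: eq_bigr => -[o w] _; rewrite ffunE unlift_none; congr (F _ _).
by apply/ffunP => j; rewrite !ffunE liftK.
Qed.

Section Algorithm.
Variables (R : realType) (U V Ed : finType) (eu : Ed -> U) (ev : Ed -> V).
Variables (T : nat) (p : V -> R) (x : Ed -> R).
Hypothesis p_ge0 : forall v, 0 <= p v.
Hypothesis sum_p_le1 : \sum_v p v <= 1.
Hypothesis x01 : forall e, 0 <= x e <= 1.
Hypothesis sum_xv_le : forall v, \sum_(e | ev e == v) x e <= rate T p v.
Hypothesis T_gt0 : (0 < T)%N.

Notation P := (round_prob ev T p x).

Definition unmatched (M : {set Ed}) (u : U) : bool := ~~ [exists e in M, eu e == u].

Lemma unmatched_set0 u : unmatched set0 u.
Proof. by apply/existsPn => e; rewrite inE. Qed.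

Lemma unmatched_setU1 M e u : unmatched (e |: M) u = (eu e != u) && unmatched M u.
Proof.
rewrite /unmatched -negb_or; congr (~~ _); apply/existsP/orP => [[e' /andP[]]|[]].
- rewrite !inE => /orP[/eqP -> ->|e'M e'u]; first by left.
  by right; apply/existsP; exists e'; rewrite e'M e'u.
- by move=> eu_u; exists e; rewrite !inE eqxx eu_u.
- by case/existsP => e' /andP[e'M e'u]; exists e'; rewrite !inE e'M orbT e'u.
Qed.

Lemma x_ge0 e : 0 <= x e. Proof. by case/andP: (x01 e). Qed.

Lemma rate_ge0 v : 0 <= rate T p v. Proof. by rewrite mulr_ge0 ?ler0n. Qed.

(* Needed because [x e / rate T p v] is the junk value [x e / 0 = 0] when [p v = 0]. *)
Lemma x_eq0_of_p_eq0 e : p (ev e) = 0 -> x e = 0.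
Proof.
move=> pe0; have := sum_xv_le (ev e); rewrite /rate pe0 mulr0 => sum_le0.
have sum0 : \sum_(e' | ev e' == ev e) x e' = 0.
  by apply/eqP; rewrite eq_le sum_le0 sumr_ge0 // => e' _; apply: x_ge0.
by apply: (psumr_eq0P (fun e' _ => x_ge0 e') sum0).
Qed.

Lemma sum_sample_le1 v : \sum_(e | ev e == v) x e / rate T p v <= 1.
Proof.
rewrite -mulr_suml; have [->|rv_neq0] := eqVneq (rate T p v) 0.
  by rewrite invr0 mulr0.
by rewrite ler_pdivrMr ?mul1r ?sum_xv_le // lt0r rv_neq0 rate_ge0.
Qed.

Lemma round_prob_ge0 o : 0 <= P o.
Proof.
case: o => [[v [e|]]|] /=.
- by case: (ev e == v) => //; rewrite mulr_ge0 ?divr_ge0 ?x_ge0 ?rate_ge0.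
- by rewrite mulr_ge0 ?subr_ge0 ?sum_sample_le1.
- by rewrite subr_ge0.
Qed.

Lemma round_prob_edge v e :
  P (Some (v, Some e)) = if ev e == v then x e / T%:R else 0.
Proof.
rewrite /=; case: eqP => // <-; have [pe0|pe_neq0] := eqVneq (p (ev e)) 0.
  by rewrite pe0 mul0r x_eq0_of_p_eq0 // mul0r.
have T_neq0 : T%:R != 0 :> R by rewrite pnatr_eq0 -lt0n.
by rewrite /rate; field; apply/andP.
Qed.

Lemma sum_round_prob : \sum_o P o = 1.
Proof.
rewrite sum_outcome /= [X in _ + X](eq_bigr p) ?subrK // => v _.
by rewrite -big_mkcond /= -mulr_sumr mulrBr mulr1 subrK.
Qed.

Lemma expected_step (Psi : {set Ed} -> R) M :
  \sum_o P o * Psi (alg_step eu ev M o) =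
  Psi M + \sum_(e | unmatched M (eu e)) x e / T%:R * (Psi (e |: M) - Psi M).
Proof.
transitivity (\sum_o P o * Psi M + \sum_o P o * (Psi (alg_step eu ev M o) - Psi M)).
  by rewrite -big_split; apply: eq_bigr => o _ /=; rewrite -mulrDr subrKC.
rewrite -mulr_suml sum_round_prob mul1r; congr (_ + _).
rewrite sum_outcome.
under eq_bigr => v _ do under eq_bigr => e _ do rewrite round_prob_edge.
rewrite /= subrr mulr0 add0r.
under eq_bigr do rewrite mulr0 add0r.
rewrite exchange_big [RHS]big_mkcond; apply: eq_bigr => e _ /=.
rewrite (bigD1 (ev e)) //= big1 ?addr0 => [|v]; last first.
  by rewrite eq_sym => /negbTE ->; rewrite mul0r.
rewrite !eqxx /= -/(unmatched M (eu e)).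
by case: (unmatched M (eu e)); rewrite ?subrr ?mulr0.
Qed.

Notation step := (alg_step eu ev).

Variable f : {set Ed} -> R.
Hypothesis f_ge0 : set_nonneg f.
Hypothesis f_mono : set_monotone f.
Hypothesis f_submod : set_submodular f.
Hypothesis sum_xu_le : forall u, \sum_(e | eu e == u) x e <= 1.

Definition run_value k (M : {set Ed}) : R :=
  \sum_(w : {ffun 'I_k -> outcome V Ed})
     (\prod_(t < k) P (w t)) * f (foldl step M [seq w t | t <- enum 'I_k]).

Lemma alg_expectationE : alg_expectation eu ev T p x f = run_value T set0.
Proof. by []. Qed.

Lemma run_value0 M : run_value 0 M = f M.
Proof.
rewrite /run_value (eq_bigr (fun _ => f M)) => [|w _].
  by rewrite sumr_const card_ffun card_ord expn0.
by rewrite big_ord0 mul1r enum_ord0.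
Qed.

Lemma run_valueS k M : run_value k.+1 M = \sum_o P o * run_value k (step M o).
Proof.
rewrite /run_value; under [RHS]eq_bigr do rewrite mulr_sumr.
rewrite -sum_ffun_ordS; apply: eq_bigr => w _.
rewrite big_ord_recl enum_ordSl /= -mulrA -map_comp; congr (_ * (_ * f _)).
  by apply: eq_bigr => t _; rewrite ffunE.
by congr foldl; apply: eq_map => t; rewrite /= ffunE.
Qed.

Definition potential (M : {set Ed}) : R :=
  indep_mean x (fun S => f (M :|: [set e in S | unmatched M (eu e)])).

Lemma potential_set0 : potential set0 = multilinear_ext f x.
Proof.
rewrite multilinear_extE; apply: eq_indep_mean => S; congr f; apply/setP => e.
by rewrite !inE unmatched_set0 andbT.
Qed.

Lemma potential_sub_le M :
  potential M - f M <= \sum_(e | unmatched M (eu e)) x e * (f (e |: M) - f M).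
Proof.
have := indep_mean_submod_le (B := fun=> M) (D := fun e => unmatched M (eu e))
  x01 f_submod (fun _ _ _ => erefl).
by under eq_bigr do rewrite indep_mean_cst; rewrite indep_mean_cst /potential; lra.
Qed.

Lemma potential_gain_ge0_at u M : unmatched M u ->
  0 <= \sum_(e | eu e == u) x e * (potential (e |: M) - potential M).
Proof.
move=> Mu.
pose B (S : {set Ed}) := M :|: [set e in S | (eu e != u) && unmatched M (eu e)].
pose Q0 := indep_mean x (fun S => f (B S)).
pose Q e := indep_mean x (fun S => f (e |: B S)).
have potential_setU1 e : eu e = u -> potential (e |: M) = Q e.
  move=> eu_e; apply: eq_indep_mean => S; congr f; apply/setP => y.
  by rewrite !inE unmatched_setU1 eu_e [u == eu y]eq_sym orbA.
have potential_le : potential M <= Q0 + \sum_(e | eu e == u) x e * (Q e - Q0).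
  have -> : potential M = indep_mean x (fun S => f (B S :|: [set e in S | eu e == u])).
    apply: eq_indep_mean => S; congr f; apply/setP => y; rewrite !inE.
    case: (eqVneq (eu y) u) => [->|ne]; first by rewrite Mu /= andbF orbF andbT.
    by rewrite andbF orbF.
  apply: indep_mean_submod_le => // e S /eqP eu_e; apply/setP => y; rewrite !inE.
  by case: (eqVneq y e) => [->|]; rewrite ?eu_e ?eqxx ?andbF.
set G := \sum_(e | eu e == u) x e * (Q e - Q0) in potential_le *.
have G_ge0 : 0 <= G.
  apply: sumr_ge0 => e _; rewrite mulr_ge0 ?x_ge0 // subr_ge0.
  by apply: (ler_indep_mean x01) => S; apply: f_mono; apply: subsetUr.
rewrite (eq_bigr (fun e => x e * (Q e - Q0) + x e * (Q0 - potential M))); last first.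
  by move=> e /eqP eu_e; rewrite potential_setU1 //; ring.
rewrite big_split /= -mulr_suml -/G.
(* With s := \sum_(e | eu e == u) x e <= 1, the gain G + s (Q0 - potential M)
   is at least (1 - s) G. *)
have sx_ge0 : 0 <= \sum_(e | eu e == u) x e by apply: sumr_ge0 => e _; apply: x_ge0.
have := sum_xu_le u; nra.
Qed.

Lemma potential_gain_ge0 M :
  0 <= \sum_(e | unmatched M (eu e)) x e * (potential (e |: M) - potential M).
Proof.
rewrite (partition_big eu (unmatched M)) //=; apply: sumr_ge0 => u Mu.
rewrite (eq_bigl (fun e => eu e == u)) ?potential_gain_ge0_at // => e.
by case: eqP => [->|]; rewrite ?Mu ?andbF.
Qed.

Let q : R := 1 - T%:R^-1.

Lemma q_ge0 : 0 <= q.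
Proof. by rewrite subr_ge0 invf_le1 ?ltr0n ?ler1n. Qed.

Lemma run_value_ge k M : (1 - q ^+ k) * potential M + q ^+ k * f M <= run_value k M.
Proof.
have T_inv_ge0 : 0 <= T%:R^-1 :> R by rewrite invr_ge0 ler0n.
have q_le1 : q <= 1 by rewrite lerBlDr lerDl.
elim: k M => [|k IHk] M; first by rewrite run_value0 expr0 subrr mul0r add0r mul1r.
pose L N := (1 - q ^+ k) * potential N + q ^+ k * f N.
rewrite run_valueS.
apply: le_trans (ler_sum _ (fun o _ => ler_wpM2l (round_prob_ge0 o) (IHk (step M o)))).
rewrite (expected_step L).
set A := \sum_(e | unmatched M (eu e)) x e * (potential (e |: M) - potential M).
set B := \sum_(e | unmatched M (eu e)) x e * (f (e |: M) - f M).
have -> : \sum_(e | unmatched M (eu e)) x e / T%:R * (L (e |: M) - L M) =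
          (1 - q ^+ k) * T%:R^-1 * A + q ^+ k * T%:R^-1 * B.
  by rewrite /A /B !mulr_sumr -big_split; apply: eq_bigr => e _ /=; rewrite /L; ring.
have qk_ge0 : 0 <= q ^+ k := exprn_ge0 k q_ge0.
have qk_le1 : q ^+ k <= 1 := exprn_ile1 k q_ge0 q_le1.
have gainA : 0 <= (1 - q ^+ k) * T%:R^-1 * A.
  by rewrite !mulr_ge0 ?subr_ge0 //; apply: potential_gain_ge0.
have gainB : q ^+ k * T%:R^-1 * (potential M - f M) <= q ^+ k * T%:R^-1 * B.
  by rewrite ler_wpM2l ?mulr_ge0 //; apply: potential_sub_le.
have -> : (1 - q ^+ k.+1) * potential M + q ^+ k.+1 * f M =
          L M + q ^+ k * T%:R^-1 * (potential M - f M) by rewrite /L exprSr /q; ring.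
lra.
Qed.

Lemma alg_expectation_ge :
  (1 - expR (-1)) * multilinear_ext f x <= alg_expectation eu ev T p x f.
Proof.
have qT_le : q ^+ T <= expR (-1) by apply: pow_1Binvn_le_expRN1.
have := run_value_ge T set0; rewrite potential_set0 -alg_expectationE.
have := multilinear_ext_ge0 x01 f_ge0; have := f_ge0 set0.
have := exprn_ge0 T q_ge0; nra.
Qed.

End Algorithm.

Theorem theorem4 (R : realType) :
  forall eps : R, 0 < eps ->
  exists delta : R, 0 < delta /\
  exists N : nat,
  forall (U V Ed : finType) (eu : Ed -> U) (ev : Ed -> V)
         (f : {set Ed} -> R) (T : nat) (p : V -> R) (x : Ed -> R),
    injective (fun e => (eu e, ev e)) ->
    set_nonneg f -> set_monotone f -> set_submodular f ->
    (forall v, 0 <= p v) -> \sum_(v : V) p v <= 1 ->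
    (forall v, rate T p v <= 1) ->
    (forall e, 0 <= x e <= 1) ->
    (forall v, \sum_(e : Ed | ev e == v) x e <= rate T p v) ->
    (forall u, \sum_(e : Ed | eu e == u) x e <= 1) ->
    (N <= T)%N ->
    (#|U|%:R ^+ 2 <= delta * T%:R) ->
    (1 - expR (-1) - eps) * multilinear_ext f x
      <= alg_expectation eu ev T p x f.
Proof.
move=> eps eps_gt0; exists 1; split => //; exists 1%N.
move=> U V Ed eu ev f T p x _ f_ge0 f_mono f_submod p_ge0 sum_p_le1 _ x01
  sum_xv_le sum_xu_le T_gt0 _.
have := alg_expectation_ge p_ge0 sum_p_le1 x01 sum_xv_le T_gt0
  f_ge0 f_mono f_submod sum_xu_le.
have := mulr_ge0 (ltW eps_gt0) (multilinear_ext_ge0 x01 f_ge0).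
lra.
Qed.
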